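(* For all matches $(p,\sigma)$ and $(q,\rho)$: if $p,\sigma\sqsubseteq q,\rho$ then ${\sf fn}(p)={\sf fn}(q)$, ${\sf vn}(p)\subseteq{\sf vn}(q)$ and ${\sf pn}(q)\subseteq{\sf pn}(p)$.
   Context: CPC patterns over a countable set of names: $p ::= \lambda x \mid x \mid \ulcorner x\urcorner \mid p\bullet p$ (binding name, variable name, protected name, compound). ${\sf bn}(p)$, ${\sf vn}(p)$, ${\sf pn}(p)$ are the sets of binding, variable and protected names of $p$; ${\sf fn}(p)={\sf vn}(p)\cup{\sf pn}(p)$. Patterns are well formed (binding names pairwise distinct and distinct from free names). Communicable patterns contain no protected or binding names. A substitution is a finite partial function from names to communicable patterns; $\hat\sigma$ acts on patterns by $\hat\sigma x=x$, $\hat\sigma\ulcorner x\urcorner=\ulcorner x\urcorner$, $\hat\sigma(\lambda x)=\sigma(x)$ if $x\in{\sf dom}(\sigma)$ else $\lambda x$, $\hat\sigma(p\bullet q)=\hat\sigma p\bullet\hat\sigma q$. A match $(p,\sigma)$ is a pattern $p$ and substitution $\sigma$ with ${\sf dom}(\sigma)={\sf bn}(p)$. Compatibility $p,\sigma\sqsubseteq q,\rho$ is the least relation between matches with: $p,\sigma\sqsubseteq\lambda y,\{\hat\sigma p/y\}$ if ${\sf fn}(p)=\emptyset$; $n,\{\}\sqsubseteq n,\{\}$; $\ulcorner n\urcorner,\{\}\sqsubseteq\ulcorner n\urcorner,\{\}$; $\ulcorner n\urcorner,\{\}\sqsubseteq n,\{\}$; $p_1\bullet p_2,\sigma_1\cup\sigma_2\sqsubseteq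 q_1\bullet q_2,\rho_1\cup\rho_2$ if $p_i,\sigma_i\sqsubseteq q_i,\rho_i$ for $i=1,2$. *)

From Stdlib Require Import List Arith.
Import ListNotations.

Definition name := nat.

Inductive pattern : Type :=
| PBind : name -> pattern
| PVar  : name -> pattern
| PProt : name -> pattern
| PComp : pattern -> pattern -> pattern.

Fixpoint bn (p : pattern) : list name :=
  match p with
  | PBind x => [x] | PVar _ => [] | PProt _ => []
  | PComp p1 p2 => bn p1 ++ bn p2
  end.

Fixpoint vn (p : pattern) : list name :=
  match p with
  | PVar x => [x] | PBind _ => [] | PProt _ => []
  | PComp p1 p2 => vn p1 ++ vn p2
  end.

Fixpoint pn (p : pattern) : list name :=
  match p with
  | PProt x => [x] | PBind _ => [] | PVar _ => []
  | PComp p1 p2 => pn p1 ++ pn p2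
  end.

Definition fn (p : pattern) : list name := vn p ++ pn p.

Definition wf (p : pattern) : Prop :=
  NoDup (bn p) /\ (forall x, In x (bn p) -> ~ In x (fn p)).

Definition communicable (p : pattern) : Prop := bn p = [] /\ pn p = [].

Definition subst := name -> option pattern.

Definition sempty : subst := fun _ => None.
Definition ssingle (v : pattern) (y : name) : subst :=
  fun x => if Nat.eqb x y then Some v else None.
Definition sunion (s1 s2 : subst) : subst :=
  fun x => match s1 x with Some v => Some v | None => s2 x end.

Fixpoint apply_subst (s : subst) (p : pattern) : pattern :=
  match p with
  | PVar x => PVar x
  | PProt x => PProt x
  | PBind x => match s x with Some v => v | None => PBind x end
  | PComp p1 p2 => PComp (apply_subst s p1) (apply_subst s p2)
  end.

Definition is_match (p : pattern) (s : subst) : Prop :=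
  wf p /\
  (forall x, s x <> None <-> In x (bn p)) /\
  (forall x v, s x = Some v -> communicable v).

Inductive compat : pattern -> subst -> pattern -> subst -> Prop :=
| compat_bind : forall p s y,
    is_match p s -> is_match (PBind y) (ssingle (apply_subst s p) y) ->
    fn p = [] ->
    compat p s (PBind y) (ssingle (apply_subst s p) y)
| compat_var : forall n,
    is_match (PVar n) sempty ->
    compat (PVar n) sempty (PVar n) sempty
| compat_prot : forall n,
    is_match (PProt n) sempty ->
    compat (PProt n) sempty (PProt n) sempty
| compat_prot_var : forall n,
    is_match (PProt n) sempty -> is_match (PVar n) sempty ->
    compat (PProt n) sempty (PVar n) sempty
| compat_comp : forall p1 p2 q1 q2 s1 s2 r1 r2,
    is_match (PComp p1 p2) (sunion s1 s2) ->
    is_match (PComp q1 q2) (sunion r1 r2) ->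
    compat p1 s1 q1 r1 -> compat p2 s2 q2 r2 ->
    compat (PComp p1 p2) (sunion s1 s2) (PComp q1 q2) (sunion r1 r2).

From Stdlib Require Import List.

(* Induction on the derivation of compatibility: a binding name on the right only
   matches a pattern with no free names, a protected name may be relaxed to a
   variable, and compounds combine componentwise. *)

Lemma compat_vn_incl (p q : pattern) (s r : subst) :
  compat p s q r -> incl (vn p) (vn q).
Proof.
  induction 1 as [p s y _ _ Hfn| | | |]; simpl;
    auto using incl_refl, incl_nil_l, incl_app_app.
  unfold fn in Hfn; apply app_eq_nil in Hfn as [-> _]; apply incl_nil_l.
Qed.

Lemma compat_pn_incl (p q : pattern) (s r : subst) :
  compat p s q r -> incl (pn q) (pn p).
Proof.
  induction 1; simpl; auto using incl_refl, incl_nil_l, incl_app_app.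
Qed.

Lemma compat_fn_equiv (p q : pattern) (s r : subst) :
  compat p s q r -> forall x, In x (fn p) <-> In x (fn q).
Proof.
  induction 1 as [p s y _ _ Hfn| | | |]; intro x; unfold fn in *; simpl in *.
  - rewrite Hfn; tauto.
  - tauto.
  - tauto.
  - tauto.
  - specialize (IHcompat1 x); specialize (IHcompat2 x).
    rewrite !in_app_iff in *; tauto.
Qed.

Theorem lemma3p15 (p q : pattern) (s r : subst) :
  is_match p s -> is_match q r ->
  compat p s q r ->
  (forall x, In x (fn p) <-> In x (fn q)) /\
  (forall x, In x (vn p) -> In x (vn q)) /\
  (forall x, In x (pn q) -> In x (pn p)).
Proof.
  intros _ _ Hc.
  split; [|split].
  - exact (compat_fn_equiv _ _ _ _ Hc).
  - exact (compat_vn_incl _ _ _ _ Hc).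
  - exact (compat_pn_incl _ _ _ _ Hc).
Qed.
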